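(* Suppose the system is i-IOSS with $\mathcal{KL}$ function $\alpha$. Let $\delta_0>0$ and let $\underline{\rho}\in\mathcal{KL}$ satisfy $\underline{\rho}(|\tilde{\pi}_i|,\tau)\ge\alpha(2|\tilde{\pi}_i|,\tau)$ for all $\tilde{\boldsymbol{\pi}}_{0:2t}\in\Pi_{\delta_0}$, $i\in\mathbb{I}_{0:2t}$, $\tau\in\mathbb{I}_{0:t}$ and $t\ge0$ (such $\underline{\rho}$ always exists). Then the FIE cost function $$V_t(\tilde{\boldsymbol{\pi}}_{0:2t}):=\max_{i\in\mathbb{I}_{0:2t}}\underline{\rho}(|\tilde{\pi}_i|,t-\iota(\tilde{\pi}_i)-1)$$ satisfies the following two conditions on $\Pi_{\delta_0}$: (A2) there exist $\underline{\rho}',\rho\in\mathcal{KL}$ with $\max_i\underline{\rho}'(|\tilde{\pi}_i|,t-\iota(\tilde{\pi}_i)-1)\le V_t(\tilde{\boldsymbol{\pi}}_{0:2t})\le\max_i\rho(|\tilde{\pi}_i|,t-\iota(\tilde{\pi}_i)-1)$ for all $\tilde{\boldsymbol{\pi}}_{0:2t}\in\Pi_{\delta_0}$, $t\ge0$; and (A3) for these $\underline{\rho}',\rho$ there is $\bar{\alpha}\in\mathcal{KL}$ with $\alpha(2\underline{\rho}'^{-1}(\rho(|\tilde{\pi}_i|,\tau),\tau'),\tau')\le\bar{\alpha}(|\tilde{\pi}_i|,\tau)$ for all $\tilde{\boldsymbol{\pi}}_{0:2t}\in\Pi_{\delta_0}$, $i$, and $\tau,\tau'\in\mathbb{I}_{0:t}$.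 The same holds with $\Pi$ in place of $\Pi_{\delta_0}$ (global case) when the inequality on $\underline{\rho}$ holds on $\Pi$. In either case, if the system is exp-i-IOSS, then $\underline{\rho}$ can be taken of the form $\underline{\rho}(s,\tau)=csb^\tau$ with some $c>0$, $b\in(0,1)$, for all $\tau\ge0$ and $s$ in the applicable domain.
   Context: System $x_{t+1}=f(x_t,w_t)$, $y_t=h(x_t)+v_t$, $x_t\in\mathbb{X}\subseteq\mathbb{R}^n$, $w_t\in\mathbb{W}\subseteq\mathbb{R}^g$, $v_t\in\mathbb{V}\subseteq\mathbb{R}^p$, $f,h$ continuous; $\bar{x}_0$ prior estimate of $x_0$. $\mathcal{KL}$ functions as usual; $\underline{\rho}'^{-1}(\cdot,\tau)$ denotes the inverse of $\underline{\rho}'(\cdot,\tau)$ in its first argument. i-IOSS: there is $\alpha\in\mathcal{KL}$ such that for any two initial states $x^{(1)}_0,x^{(2)}_0$ and disturbance sequences $\boldsymbol{w}^{(1)}_{0:t-1},\boldsymbol{w}^{(2)}_{0:t-1}$, $|x^{(1)}_t-x^{(2)}_t|\le\max_{i\in\mathbb{I}_{0:2t}}\alpha(|\pi_i|,t-\iota(\pi_i)-1)$ for all $t$, where $\pi_0:=x^{(1)}_0-x^{(2)}_0$, $\pi_{\tau+1}:=w^{(1)}_\tau-w^{(2)}_\tau$, $\pi_{\tau+t+1}:=h(x^{(2)}_\tau)-h(x^{(1)}_\tau)$ ($\tau\in\mathbb{I}_{0:t-1}$), with $\iota(\pi_0)=-1$, $\iota(\pi_{\tau+1})=\iota(\pi_{\tau+t+1})=\tau$;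 exp-i-IOSS if $\alpha(s,\tau)=cs\lambda^\tau$, $c>0$, $\lambda\in(0,1)$. FIE decision variables $\chi_0\in\mathbb{X}$, $\omega_{0:t-1}\in\mathbb{W}^t$, $\nu_{0:t-1}\in\mathbb{V}^t$ are collected as $\tilde{\pi}_0:=\chi_0-\bar{x}_0$, $\tilde{\pi}_{\tau+1}:=\omega_\tau$, $\tilde{\pi}_{\tau+t+1}:=\nu_\tau$ with the same time indices $\iota$; $\Pi$ is the set of such sequences with $\chi_0,\bar{x}_0\in\mathbb{X}$ and $\Pi_{\delta_0}$ those with $|\chi_0-\bar{x}_0|\le\delta_0$. The FIE at time $t$ minimizes $V_t(\tilde{\boldsymbol{\pi}}_{0:2t})$ subject to $\chi_{\tau+1}=f(\chi_\tau,\omega_\tau)$, $y_\tau=h(\chi_\tau)+\nu_\tau$. *)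

From HB Require Import structures.
From mathcomp Require Import all_boot all_order all_algebra.
From mathcomp Require Import all_classical all_reals all_analysis.
Set Implicit Arguments. Unset Strict Implicit. Unset Printing Implicit Defensive.
Import Order.TTheory GRing.Theory Num.Theory.
Import numFieldNormedType.Exports.
Local Open Scope classical_set_scope.
Local Open Scope ring_scope.

Definition classK (R : realType) (a : R -> R) : Prop :=
  [/\ a 0 = 0,
      {within [set s : R | 0 <= s], continuous a} &
      (forall s1 s2, 0 <= s1 -> s1 < s2 -> a s1 < a s2)].

Definition classKL (R : realType) (b : R -> nat -> R) : Prop :=
  (forall tau, classK (fun s => b s tau)) /\
  (forall s, 0 <= s ->
     (forall tau, b s tau.+1 <= b s tau) /\ (fun tau => b s tau) @ \oo --> 0).

Definition expKL (R : realType) (c b : R) : R -> nat -> R :=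
  fun s tau => c * s * b ^+ tau.

(* The time argument t - iota(pi_i) - 1 of the i-th entry of pi_{0:2t}:
   iota(pi_0) = -1, iota(pi_{tau+1}) = iota(pi_{tau+t+1}) = tau. *)
Definition comp_time (t i : nat) : nat :=
  if i == 0%N then t else if (i <= t)%N then (t - i)%N else (2 * t - i)%N.

(* Norms |pi_i| of the entries of pi_{0:2t}, where pi_0 = e0,
   pi_{tau+1} = d tau and pi_{tau+t+1} = e tau. *)
Definition normseq (R : realType) (n g p : nat) (e0 : 'rV[R]_n)
  (d : nat -> 'rV[R]_g) (e : nat -> 'rV[R]_p) (t i : nat) : R :=
  if i == 0%N then `|e0| else if (i <= t)%N then `|d (i.-1)| else `|e (i - t - 1)%N|.

Definition maxKL (R : realType) (rho : R -> nat -> R) (t : nat) (ns : nat -> R) : R :=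
  \big[Num.max/0]_(i < (2 * t).+1) rho (ns i) (comp_time t i).

Fixpoint traj (R : realType) (n g : nat) (f : 'rV[R]_n -> 'rV[R]_g -> 'rV[R]_n)
  (x0 : 'rV[R]_n) (w : nat -> 'rV[R]_g) (k : nat) : 'rV[R]_n :=
  match k with 0%N => x0 | k'.+1 => f (traj f x0 w k') (w k') end.

Definition iIOSS (R : realType) (n g p : nat) (X : set 'rV[R]_n) (W : set 'rV[R]_g)
  (f : 'rV[R]_n -> 'rV[R]_g -> 'rV[R]_n) (h : 'rV[R]_n -> 'rV[R]_p)
  (alpha : R -> nat -> R) : Prop :=
  classKL alpha /\
  forall x1 x2 (w1 w2 : nat -> 'rV[R]_g),
    X x1 -> X x2 -> (forall k, W (w1 k)) -> (forall k, W (w2 k)) ->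
    forall t : nat,
      `|traj f x1 w1 t - traj f x2 w2 t| <=
      maxKL alpha t
        (normseq (x1 - x2) (fun k => w1 k - w2 k)
           (fun k => h (traj f x2 w2 k) - h (traj f x1 w1 k)) t).

(* A domain of FIE decision variables at horizon t:
   D t chi0 xbar0 omega nu *)
Definition FIEdom (R : realType) (n g p : nat) : Type :=
  nat -> 'rV[R]_n -> 'rV[R]_n -> (nat -> 'rV[R]_g) -> (nat -> 'rV[R]_p) -> Prop.

Definition Pi (R : realType) (n g p : nat) (X : set 'rV[R]_n) (W : set 'rV[R]_g)
  (V : set 'rV[R]_p) : FIEdom R n g p :=
  fun t chi0 xb0 om nu =>
    [/\ X chi0, X xb0 & forall tau, (tau < t)%N -> W (om tau) /\ V (nu tau)].

Definition Pi_delta (R : realType) (n g p : nat) (X : set 'rV[R]_n) (W : set 'rV[R]_g)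
  (V : set 'rV[R]_p) (delta0 : R) : FIEdom R n g p :=
  fun t chi0 xb0 om nu => Pi X W V t chi0 xb0 om nu /\ `|chi0 - xb0| <= delta0.

Definition pinorms (R : realType) (n g p : nat) (chi0 xb0 : 'rV[R]_n)
  (om : nat -> 'rV[R]_g) (nu : nat -> 'rV[R]_p) (t : nat) : nat -> R :=
  normseq (chi0 - xb0) om nu t.

Definition FIEcost (R : realType) (rho_ : R -> nat -> R) (n g p : nat)
  (chi0 xb0 : 'rV[R]_n) (om : nat -> 'rV[R]_g) (nu : nat -> 'rV[R]_p) (t : nat) : R :=
  maxKL rho_ t (pinorms chi0 xb0 om nu t).

Definition rho_hyp (R : realType) (n g p : nat) (D : FIEdom R n g p)
  (alpha rho_ : R -> nat -> R) : Prop :=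
  forall t chi0 xb0 om nu, D t chi0 xb0 om nu ->
  forall i tau, (i <= 2 * t)%N -> (tau <= t)%N ->
    alpha (2 * pinorms chi0 xb0 om nu t i) tau <= rho_ (pinorms chi0 xb0 om nu t i) tau.

Definition condA2 (R : realType) (n g p : nat) (D : FIEdom R n g p)
  (rho_ rho' rho : R -> nat -> R) : Prop :=
  forall t chi0 xb0 om nu, D t chi0 xb0 om nu ->
    maxKL rho' t (pinorms chi0 xb0 om nu t) <= FIEcost rho_ chi0 xb0 om nu t /\
    FIEcost rho_ chi0 xb0 om nu t <= maxKL rho t (pinorms chi0 xb0 om nu t).

(* (A3); the inverse rho'^{-1}(y, tau') is written relationally:
   r >= 0 with rho'(r, tau') = y (unique, rho'(., tau') being strictly increasing) *)
Definition condA3 (R : realType) (n g p : nat) (D : FIEdom R n g p)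
  (alpha rho' rho abar : R -> nat -> R) : Prop :=
  forall t chi0 xb0 om nu, D t chi0 xb0 om nu ->
  forall i tau tau', (i <= 2 * t)%N -> (tau <= t)%N -> (tau' <= t)%N ->
  forall r, 0 <= r -> rho' r tau' = rho (pinorms chi0 xb0 om nu t i) tau ->
    alpha (2 * r) tau' <= abar (pinorms chi0 xb0 om nu t i) tau.

Definition FIE_conditions (R : realType) (n g p : nat) (D : FIEdom R n g p)
  (alpha rho_ : R -> nat -> R) : Prop :=
  exists rho' rho, [/\ classKL rho', classKL rho, condA2 D rho_ rho' rho &
    exists abar, classKL abar /\ condA3 D alpha rho' rho abar].

From HB Require Import structures.
From mathcomp Require Import all_boot all_order all_algebra.
From mathcomp Require Import all_classical all_reals all_analysis.
From mathcomp Require Import zify.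
Set Implicit Arguments.
Unset Strict Implicit.
Unset Printing Implicit Defensive.
Import Order.TTheory GRing.Theory Num.Theory.
Import numFieldNormedType.Exports.
Local Open Scope classical_set_scope.
Local Open Scope ring_scope.

(* The choice rho'(s, tau) := alpha(2 s, tau) and rho := rho_ gives (A2) directly from the
   hypothesis on rho_, and makes alpha(2 rho'^{-1}(rho(s, tau), tau'), tau') equal to
   rho(s, tau), so abar := rho_ witnesses (A3).  alpha(2 s, tau) is itself an admissible
   rho_, which for alpha(s, tau) = c s lam^tau is the exponential function 2 c s lam^tau. *)

Lemma within_continuous_comp (T U S : topologicalType) (A : set T) (B : set U)
    (phi : T -> U) (g : U -> S) :
  continuous phi -> phi @` A `<=` B -> {within B, continuous g} ->
  {within A, continuous (g \o phi)}.
Proof.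
move=> phi_cont phiAB /subspace_continuousP g_cont.
apply/subspace_continuousP => x Ax.
have phi_within : phi @ within A (nbhs x) --> within B (nbhs (phi x)).
  move=> P BP; apply: (@filterS _ (nbhs x)) (phi_cont x _ BP) => y BPy Ay.
  by apply: BPy; apply: phiAB; exists y.
exact: cvg_comp phi_within (g_cont _ (phiAB _ (imageP _ Ax))).
Qed.

Lemma classK_scale (R : realType) (a : R -> R) (k : R) :
  0 < k -> classK a -> classK (fun s => a (k * s)).
Proof.
move=> k_gt0 [a0 a_cont a_incr]; split.
- by rewrite mulr0.
- apply: (within_continuous_comp (phi := *%R k) _ _ a_cont).
    exact: mulrl_continuous.
  by move=> _ [s s_ge0 <-]; rewrite /= mulr_ge0 // ltW.
- move=> s1 s2 s1_ge0 lt_s12; apply: a_incr; first by rewrite mulr_ge0 // ltW.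
  by rewrite ltr_pM2l.
Qed.

Lemma classKL_scale (R : realType) (a : R -> nat -> R) (k : R) :
  0 < k -> classKL a -> classKL (fun s tau => a (k * s) tau).
Proof.
move=> k_gt0 [aK aL]; split=> [tau|s s_ge0]; first exact: classK_scale (aK tau).
by apply: aL; rewrite mulr_ge0 // ltW.
Qed.

Lemma classKL_expKL (R : realType) (c b : R) :
  0 < c -> 0 < b < 1 -> classKL (expKL c b).
Proof.
move=> c_gt0 /andP[b_gt0 b_lt1]; rewrite /expKL; split=> [tau|s s_ge0].
  split.
  - by rewrite mulr0 mul0r.
  - apply: continuous_subspaceT => x.
    exact: continuous_comp (@mulrl_continuous _ c x) (@mulrr_continuous _ (b ^+ tau) _).
  - by move=> s1 s2 _ lt_s12; rewrite ltr_pM2r ?exprn_gt0 // ltr_pM2l.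
split=> [tau|].
  by rewrite exprS mulrCA ler_piMl ?(ltW b_lt1) // !mulr_ge0 ?exprn_ge0 // ltW.
by apply: cvg_geometric; rewrite ger0_norm ?ltW.
Qed.

Lemma comp_time_le t i : (comp_time t i <= t)%N.
Proof.
rewrite /comp_time; case: eqP => // _.
by case: (leqP i t) => [_|lt_ti]; [exact: leq_subr | lia].
Qed.

Lemma ler_maxKL (R : realType) (r1 r2 : R -> nat -> R) t ns :
  (forall i, (i <= 2 * t)%N ->
     r1 (ns i) (comp_time t i) <= r2 (ns i) (comp_time t i)) ->
  maxKL r1 t ns <= maxKL r2 t ns.
Proof. by move=> le_r12; apply: le_bigmax2 => i _; apply: le_r12; rewrite -ltnS. Qed.

Lemma rho_hyp_of_le (R : realType) (n g p : nat) (D : FIEdom R n g p)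
    (alpha rho_ : R -> nat -> R) :
  (forall s tau, alpha (2 * s) tau <= rho_ s tau) -> rho_hyp D alpha rho_.
Proof. by move=> le_alpha_rho t chi0 xb0 om nu _ i tau _ _. Qed.

Lemma FIE_conditions_of_rho_hyp (R : realType) (n g p : nat) (D : FIEdom R n g p)
    (alpha rho_ : R -> nat -> R) :
  classKL alpha -> classKL rho_ -> rho_hyp D alpha rho_ ->
  FIE_conditions D alpha rho_.
Proof.
move=> alphaKL rhoKL hyp.
exists (fun s tau => alpha (2 * s) tau), rho_; split => //.
- exact: classKL_scale.
- move=> t chi0 xb0 om nu Dpi; split => //.
  by apply: ler_maxKL => i le_i2t; apply: hyp => //; exact: comp_time_le.
- by exists rho_; split => // t chi0 xb0 om nu _ i tau tau' _ _ _ r _ ->.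
Qed.

Lemma expKL_scale2 (R : realType) (c b s : R) tau :
  expKL c b (2 * s) tau = expKL (2 * c) b s tau.
Proof. by rewrite /expKL mulrA (mulrC c 2). Qed.

Theorem lemma16 (R : realType) (n g p : nat) (X : set 'rV[R]_n) (W : set 'rV[R]_g)
  (V : set 'rV[R]_p) (f : 'rV[R]_n -> 'rV[R]_g -> 'rV[R]_n) (h : 'rV[R]_n -> 'rV[R]_p)
  (alpha : R -> nat -> R) (delta0 : R) :
  continuous (fun xw : 'rV[R]_n * 'rV[R]_g => f xw.1 xw.2) ->
  continuous h ->
  iIOSS X W f h alpha ->
  0 < delta0 ->
  (* such rho_ always exists (local and global) *)
  (exists rho_, classKL rho_ /\ rho_hyp (Pi_delta X W V delta0) alpha rho_) /\
  (exists rho_, classKL rho_ /\ rho_hyp (Pi X W V) alpha rho_) /\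
  (* local case *)
  (forall rho_, classKL rho_ -> rho_hyp (Pi_delta X W V delta0) alpha rho_ ->
     FIE_conditions (Pi_delta X W V delta0) alpha rho_) /\
  (* global case *)
  (forall rho_, classKL rho_ -> rho_hyp (Pi X W V) alpha rho_ ->
     FIE_conditions (Pi X W V) alpha rho_) /\
  (* exponential case *)
  (forall c lam : R, 0 < c -> 0 < lam < 1 -> iIOSS X W f h (expKL c lam) ->
     exists c' b : R, [/\ 0 < c', 0 < b < 1, classKL (expKL c' b),
       rho_hyp (Pi_delta X W V delta0) (expKL c lam) (expKL c' b) &
       rho_hyp (Pi X W V) (expKL c lam) (expKL c' b)]).
Proof.
move=> _ _ [alphaKL _] _.
have rho_exists (D : FIEdom R n g p) :
    exists rho_, classKL rho_ /\ rho_hyp D alpha rho_.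
  exists (fun s tau => alpha (2 * s) tau); split; first exact: classKL_scale.
  exact: rho_hyp_of_le.
do 2 (split; first exact: rho_exists).
do 2 (split; first by move=> rho_; exact: FIE_conditions_of_rho_hyp).
move=> c lam c_gt0 lam01 _.
have c2_gt0 : 0 < 2 * c by rewrite mulr_gt0.
have le_exp s tau : expKL c lam (2 * s) tau <= expKL (2 * c) lam s tau.
  by rewrite expKL_scale2.
exists (2 * c), lam.
by split; [| | exact: classKL_expKL | exact: rho_hyp_of_le le_exp ..].
Qed.
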